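(* Let $P$ be a strange polytope with base $Q$ (so $V(P)=\tfrac23|Q|$). (i) If $|Q|\le 0.411$ or $|Q|\ge 5.1$ (equivalently $V(P)\le 0.274$ or $V(P)\ge 3.4$), then $\dfrac{S(P)^3}{V(P)^2}>188$. (ii) If $|Q|\le 0.09$ or $|Q|\ge 15$ (equivalently $V(P)\le 0.06$ or $V(P)\ge 10$), then $\dfrac{S(P)^3}{V(P)^2}>344$.
   Context: $|Q|$ is the area of the planar convex set $Q$; $S$, $V$ denote surface area and volume. Strange polytope: a polytope $P=\mathrm{conv}(Q\cup\{v_1,v_2\})$ where $v_1$ is a unit vector, $v_2=-v_1$, $Q=\mathrm{conv}\{o,v_3,v_4,v_5,v_6\}\subset v_1^\perp$ is a convex polygon ($o$ the origin), and either $Q$ is a triangle, or $o$ lies on the relative boundary of $Q$ and $v_3,v_4,v_5,v_6$ are vertices of both $Q$ and $P$; $v_1,v_2$ are its apices and $Q$ its base. *)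

From Stdlib Require Import Reals Lra Arith List.
Open Scope R_scope.

(* Coordinates: by rigid-motion invariance of S and V we take v1 = e3 = (0,0,1),
   v2 = -e3, and identify the plane v1^perp with R^2 (points (x,y,0)). *)

Fixpoint rsum (n : nat) (f : nat -> R) : R :=
  match n with O => 0 | S m => rsum m f + f m end.

Definition pt2 : Type := (R * R)%type.
Definition origin2 : pt2 := (0, 0).
Definition sub2 (a b : pt2) : pt2 := (fst a - fst b, snd a - snd b).
Definition cross2 (a b : pt2) : R := fst a * snd b - snd a * fst b.
Definition dist2 (a b : pt2) : R :=
  sqrt ((fst a - fst b) ^ 2 + (snd a - snd b) ^ 2).

Definition nxt (n i : nat) : nat := Nat.modulo (S i) n.

Definition convex_polygon_ccw (n : nat) (w : nat -> pt2) : Prop :=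
  (3 <= n)%nat /\
  forall i j, (i < n)%nat -> (j < n)%nat -> j <> i -> j <> nxt n i ->
    cross2 (sub2 (w (nxt n i)) (w i)) (sub2 (w j) (w i)) > 0.

Definition in_hull2 (k : nat) (p : nat -> pt2) (x : pt2) : Prop :=
  exists lam : nat -> R,
    (forall i, (i < k)%nat -> 0 <= lam i) /\ rsum k lam = 1 /\
    fst x = rsum k (fun i => lam i * fst (p i)) /\
    snd x = rsum k (fun i => lam i * snd (p i)).

Definition extreme2 (S : pt2 -> Prop) (x : pt2) : Prop :=
  S x /\ forall p q t, S p -> S q -> 0 < t < 1 ->
    x = (t * fst p + (1 - t) * fst q, t * snd p + (1 - t) * snd q) -> p = q.

(* boundary of a set relative to the plane v1^perp (= relative boundary of a
   2-dimensional convex set lying in that plane) *)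
Definition rel_boundary2 (S : pt2 -> Prop) (x : pt2) : Prop :=
  S x /\ forall eps, eps > 0 -> exists y, dist2 x y < eps /\ ~ S y.

(* area |Q| of the convex polygon with ccw vertex list w (shoelace formula) *)
Definition polygon_area (n : nat) (w : nat -> pt2) : R :=
  / 2 * rsum n (fun i => cross2 (w i) (w (nxt n i))).

Record pt3 : Type := P3 { px : R; py : R; pz : R }.
Definition lift (a : pt2) : pt3 := P3 (fst a) (snd a) 0.
Definition e3 : pt3 := P3 0 0 1.
Definition e3m : pt3 := P3 0 0 (-1).
Definition sub3 (a b : pt3) : pt3 := P3 (px a - px b) (py a - py b) (pz a - pz b).
Definition dot3 (a b : pt3) : R := px a * px b + py a * py b + pz a * pz b.
Definition cross3 (a b : pt3) : pt3 :=
  P3 (py a * pz b - pz a * py b) (pz a * px b - px a * pz b) (px a * py b - py a * px b).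
Definition norm3 (a : pt3) : R := sqrt (dot3 a a).
Definition tri_area (a b c : pt3) : R := / 2 * norm3 (cross3 (sub3 b a) (sub3 c a)).
Definition tet_vol (a b c : pt3) : R := / 6 * Rabs (dot3 a (cross3 b c)).

Definition gensP (n : nat) (w : nat -> pt2) (i : nat) : pt3 :=
  if (i <? n)%nat then lift (w i) else if (i =? n)%nat then e3 else e3m.

Definition in_hull3 (k : nat) (p : nat -> pt3) (x : pt3) : Prop :=
  exists lam : nat -> R,
    (forall i, (i < k)%nat -> 0 <= lam i) /\ rsum k lam = 1 /\
    px x = rsum k (fun i => lam i * px (p i)) /\
    py x = rsum k (fun i => lam i * py (p i)) /\
    pz x = rsum k (fun i => lam i * pz (p i)).

Definition polytopeP (n : nat) (w : nat -> pt2) : pt3 -> Prop :=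
  in_hull3 (n + 2) (gensP n w).

Definition extreme3 (S : pt3 -> Prop) (x : pt3) : Prop :=
  S x /\ forall p q t, S p -> S q -> 0 < t < 1 ->
    x = P3 (t * px p + (1 - t) * px q) (t * py p + (1 - t) * py q)
           (t * pz p + (1 - t) * pz q) -> p = q.

(* S(P): the boundary of P (o in Q) is the union of the triangles
   conv(w_i, w_{i+1}, v1) and conv(w_i, w_{i+1}, v2) (coplanar pairs merge
   into one facet, which does not change the total area). *)
Definition surface_area (n : nat) (w : nat -> pt2) : R :=
  rsum n (fun i => tri_area (lift (w i)) (lift (w (nxt n i))) e3
                 + tri_area (lift (w i)) (lift (w (nxt n i))) e3m).

(* V(P): decomposition of P into the cones from o (in P) over these
   boundary triangles. *)
Definition volume (n : nat) (w : nat -> pt2) : R :=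
  rsum n (fun i => tet_vol (lift (w i)) (lift (w (nxt n i))) e3
                 + tet_vol (lift (w i)) (lift (w (nxt n i))) e3m).

Definition five (o v3 v4 v5 v6 : pt2) (i : nat) : pt2 :=
  match i with 0 => o | 1 => v3 | 2 => v4 | 3 => v5 | _ => v6 end.

Definition strange (n : nat) (w : nat -> pt2) : Prop :=
  convex_polygon_ccw n w /\
  exists v3 v4 v5 v6 : pt2,
    (forall x, in_hull2 n w x <-> in_hull2 5 (five origin2 v3 v4 v5 v6) x) /\
    (n = 3%nat \/
     (rel_boundary2 (in_hull2 n w) origin2 /\
      forall v, In v (v3 :: v4 :: v5 :: v6 :: nil) ->
        extreme2 (in_hull2 n w) v /\ extreme3 (polytopeP n w) (lift v))).

From Stdlib Require Import Reals Lra Lia Psatz List.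
Open Scope R_scope.

(* With v1 = e3, the two facets of P over an edge [w_i, w_(i+1)] of Q have area
   sqrt (l_i^2 + c_i^2) / 2 each, where l_i is the edge length and
   c_i = w_i x w_(i+1) >= 0 because o lies in Q; the cones from o over them give
   V = (1/3) sum c_i = (2/3)|Q|.  By Minkowski's inequality S^2 >= per(Q)^2 + 4|Q|^2.
   Q is the hull of five points, so it has at most five vertices, and every pentagon
   satisfies per^2 >= 13|Q|: cut off an ear whose two sides make up at most 2/5 of the
   perimeter and combine the quadrilateral bound per^2 >= 16|Q| with Heron's bound for
   the ear.  Hence (S^3/V^2)^2 >= 81 (13 + 4|Q|)^3 / (16|Q|), which exceeds 188^2 and
   344^2 in the respective ranges. *)

Lemma rsum_ext n f g :
  (forall i, (i < n)%nat -> f i = g i) -> rsum n f = rsum n g.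
Proof.
  induction n as [|n IH]; intros H; simpl; [reflexivity|].
  rewrite IH, H; [reflexivity | lia | intros; apply H; lia].
Qed.

Lemma rsum_add n f g : rsum n (fun i => f i + g i) = rsum n f + rsum n g.
Proof. induction n as [|n IH]; simpl; [ring|]. rewrite IH. ring. Qed.

Lemma rsum_sub n f g : rsum n (fun i => f i - g i) = rsum n f - rsum n g.
Proof. induction n as [|n IH]; simpl; [ring|]. rewrite IH. ring. Qed.

Lemma rsum_scal n k f : rsum n (fun i => k * f i) = k * rsum n f.
Proof. induction n as [|n IH]; simpl; [ring|]. rewrite IH. ring. Qed.

Lemma rsum_nonneg n f : (forall i, (i < n)%nat -> 0 <= f i) -> 0 <= rsum n f.
Proof.
  induction n as [|n IH]; intros H; simpl; [lra|].
  assert (0 <= rsum n f) by (apply IH; intros; apply H; lia).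
  assert (0 <= f n) by (apply H; lia).
  lra.
Qed.

Lemma rsum_pos n f j :
  (forall i, (i < n)%nat -> 0 <= f i) -> (j < n)%nat -> 0 < f j -> 0 < rsum n f.
Proof.
  induction n as [|n IH]; intros H Hj Hfj; [lia|]. simpl.
  assert (0 <= rsum n f) by (apply rsum_nonneg; intros; apply H; lia).
  assert (0 <= f n) by (apply H; lia).
  destruct (Nat.eq_dec j n) as [->|Hjn]; [lra|].
  assert (0 < rsum n f) by (apply IH; [intros; apply H| |]; auto; lia).
  lra.
Qed.

Lemma rsum_nonneg_eq0 n f :
  (forall i, (i < n)%nat -> 0 <= f i) -> rsum n f = 0 ->
  forall i, (i < n)%nat -> f i = 0.
Proof.
  intros H Hs i Hi.
  destruct (Rle_lt_or_eq_dec 0 (f i) (H i Hi)) as [Hpos|]; [|auto].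
  pose proof (rsum_pos n f i H Hi Hpos). lra.
Qed.

Lemma rsum_exists_pos n f : 0 < rsum n f -> exists i, (i < n)%nat /\ 0 < f i.
Proof.
  induction n as [|n IH]; simpl; intros H; [lra|].
  destruct (Rlt_dec 0 (f n)) as [Hn|Hn]; [exists n; split; auto|].
  destruct IH as [i [Hi Hfi]]; [lra|]. exists i; split; auto.
Qed.

Lemma rsum_indicator n j (g : nat -> R) :
  rsum n (fun i => (if Nat.eqb i j then 1 else 0) * g i) =
  if Nat.ltb j n then g j else 0.
Proof.
  induction n as [|n IH]; simpl; [reflexivity|]. rewrite IH.
  destruct (Nat.eqb_spec n j), (Nat.ltb_spec j n), (Nat.ltb_spec j (S n));
    try lia; subst; ring.
Qed.

Lemma rsum_succ_shift m h : rsum (S m) h = h 0%nat + rsum m (fun i => h (S i)).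
Proof. induction m as [|m IH]; [simpl; ring|]. cbn [rsum] in *. rewrite IH. ring. Qed.

Lemma nxt_cases n i :
  (i < n)%nat -> ((S i < n)%nat /\ nxt n i = S i) \/ (S i = n /\ nxt n i = 0%nat).
Proof.
  intros Hi. unfold nxt. destruct (Nat.eq_dec (S i) n) as [E|E].
  - right. split; [exact E|]. rewrite E. apply Nat.Div0.mod_same.
  - left. split; [lia|]. apply Nat.mod_small. lia.
Qed.

Lemma rsum_nxt n h : rsum n (fun i => h (nxt n i)) = rsum n h.
Proof.
  destruct n as [|m]; [reflexivity|].
  rewrite (rsum_succ_shift m h). cbn [rsum].
  destruct (nxt_cases (S m) m ltac:(lia)) as [[? _]|[_ ->]]; [lia|].
  rewrite (rsum_ext m _ (fun i => h (S i))); [ring|].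
  intros i Hi. destruct (nxt_cases (S m) i ltac:(lia)) as [[_ ->]|[? _]]; [reflexivity|lia].
Qed.

Lemma rsum_cyclic_diff n g : rsum n (fun i => g (nxt n i) - g i) = 0.
Proof. rewrite rsum_sub, (rsum_nxt n g). ring. Qed.

Lemma sum_sq_ge0 x y : 0 <= x ^ 2 + y ^ 2.
Proof. pose proof (pow2_ge_0 x). pose proof (pow2_ge_0 y). lra. Qed.

Lemma cross2_self a : cross2 a a = 0.
Proof. unfold cross2. ring. Qed.

Lemma dist2_self a : dist2 a a = 0.
Proof.
  unfold dist2. replace ((fst a - fst a) ^ 2 + (snd a - snd a) ^ 2) with 0 by ring.
  apply sqrt_0.
Qed.

Lemma dist2_sym a b : dist2 a b = dist2 b a.
Proof. unfold dist2. f_equal. ring. Qed.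

Lemma dist2_ge0 a b : 0 <= dist2 a b.
Proof. apply sqrt_pos. Qed.

Lemma dist2_sq a b : dist2 a b ^ 2 = (fst a - fst b) ^ 2 + (snd a - snd b) ^ 2.
Proof. unfold dist2. apply pow2_sqrt, sum_sq_ge0. Qed.

Lemma dot_le_norms x1 y1 x2 y2 :
  x1 * x2 + y1 * y2 <= sqrt (x1 ^ 2 + y1 ^ 2) * sqrt (x2 ^ 2 + y2 ^ 2).
Proof.
  rewrite <- sqrt_mult_alt by apply sum_sq_ge0.
  apply Rle_trans with (Rabs (x1 * x2 + y1 * y2)); [apply Rle_abs|].
  rewrite <- sqrt_Rsqr_abs. apply sqrt_le_1_alt. unfold Rsqr.
  assert (0 <= (x1 * y2 - y1 * x2) ^ 2) by apply pow2_ge_0.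
  nra.
Qed.

Lemma norm_triangle x1 y1 x2 y2 :
  sqrt ((x1 + x2) ^ 2 + (y1 + y2) ^ 2) <= sqrt (x1 ^ 2 + y1 ^ 2) + sqrt (x2 ^ 2 + y2 ^ 2).
Proof.
  pose proof (dot_le_norms x1 y1 x2 y2).
  pose proof (sqrt_pos (x1 ^ 2 + y1 ^ 2)). pose proof (sqrt_pos (x2 ^ 2 + y2 ^ 2)).
  rewrite <- (sqrt_pow2 (sqrt (x1 ^ 2 + y1 ^ 2) + sqrt (x2 ^ 2 + y2 ^ 2))) by lra.
  apply sqrt_le_1_alt.
  replace ((sqrt (x1 ^ 2 + y1 ^ 2) + sqrt (x2 ^ 2 + y2 ^ 2)) ^ 2) with
    (sqrt (x1 ^ 2 + y1 ^ 2) ^ 2 + sqrt (x2 ^ 2 + y2 ^ 2) ^ 2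
     + 2 * (sqrt (x1 ^ 2 + y1 ^ 2) * sqrt (x2 ^ 2 + y2 ^ 2))) by ring.
  rewrite !pow2_sqrt by apply sum_sq_ge0.
  lra.
Qed.

Lemma rsum_norm_le n a b :
  sqrt (rsum n a ^ 2 + rsum n b ^ 2) <= rsum n (fun i => sqrt (a i ^ 2 + b i ^ 2)).
Proof.
  induction n as [|n IH]; cbn [rsum].
  - replace (0 ^ 2 + 0 ^ 2) with 0 by ring. rewrite sqrt_0. lra.
  - eapply Rle_trans; [apply norm_triangle|]. lra.
Qed.

Lemma dist2_triangle a b c : dist2 a c <= dist2 a b + dist2 b c.
Proof.
  unfold dist2.
  replace (fst a - fst c) with ((fst a - fst b) + (fst b - fst c)) by ring.
  replace (snd a - snd c) with ((snd a - snd b) + (snd b - snd c)) by ring.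
  apply norm_triangle.
Qed.

Lemma cross2_le_dist2 a b c d : cross2 (sub2 b a) (sub2 d c) <= dist2 a b * dist2 c d.
Proof.
  unfold cross2, sub2, dist2; cbn [fst snd].
  replace ((fst c - fst d) ^ 2 + (snd c - snd d) ^ 2) with
    ((snd c - snd d) ^ 2 + (fst d - fst c) ^ 2) by ring.
  replace ((fst b - fst a) * (snd d - snd c) - (snd b - snd a) * (fst d - fst c)) with
    ((fst a - fst b) * (snd c - snd d) + (snd a - snd b) * (fst d - fst c)) by ring.
  apply dot_le_norms.
Qed.

(* [cross2] sums of closed polygons are twice their signed areas. *)
Lemma quadrilateral_isoperimetric a b c d :
  8 * (cross2 a b + cross2 b c + cross2 c d + cross2 d a) <=
  (dist2 a b + dist2 b c + dist2 c d + dist2 d a) ^ 2.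
Proof.
  assert (E : 2 * (cross2 a b + cross2 b c + cross2 c d + cross2 d a) =
     cross2 (sub2 b a) (sub2 c b) + cross2 (sub2 d c) (sub2 a d) +
     cross2 (sub2 b a) (sub2 d a) + cross2 (sub2 c b) (sub2 d c))
    by (unfold cross2, sub2; simpl; ring).
  pose proof (cross2_le_dist2 a b b c). pose proof (cross2_le_dist2 c d d a).
  pose proof (cross2_le_dist2 a b a d). pose proof (cross2_le_dist2 b c c d).
  rewrite (dist2_sym a d) in *.
  assert (0 <= (dist2 a b + dist2 c d - dist2 b c - dist2 d a) ^ 2) by apply pow2_ge_0.
  nra.
Qed.

Lemma triangle_cross2_sq_le e a b :
  4 * cross2 (sub2 a e) (sub2 b e) ^ 2 <=
  dist2 e b ^ 2 * ((dist2 e a + dist2 a b) ^ 2 - dist2 e b ^ 2).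
Proof.
  pose proof (dist2_sq e a) as Hx. pose proof (dist2_sq a b) as Hy.
  pose proof (dist2_sq e b) as Hd. pose proof (dist2_triangle e a b).
  pose proof (dist2_ge0 e a). pose proof (dist2_ge0 a b). pose proof (dist2_ge0 e b).
  set (x := dist2 e a) in *. set (y := dist2 a b) in *. set (d := dist2 e b) in *.
  set (C := cross2 (sub2 a e) (sub2 b e)).
  set (D := (fst a - fst e) * (fst b - fst a) + (snd a - snd e) * (snd b - snd a)).
  assert (Lagrange : C ^ 2 + D ^ 2 = x ^ 2 * y ^ 2)
    by (rewrite Hx, Hy; unfold C, D, cross2, sub2; cbn [fst snd]; ring).
  assert (Cosines : d ^ 2 = x ^ 2 + y ^ 2 + 2 * D) by (rewrite Hx, Hy, Hd; unfold D; ring).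
  assert (Heron : d ^ 2 * ((x + y) ^ 2 - d ^ 2) - 4 * C ^ 2
                  = (x - y) ^ 2 * ((x + y) ^ 2 - d ^ 2)).
  { replace (C ^ 2) with (x ^ 2 * y ^ 2 - D ^ 2) by lra.
    replace D with ((d ^ 2 - x ^ 2 - y ^ 2) / 2) by lra.
    field. }
  assert (0 <= (x + y) ^ 2 - d ^ 2) by nra.
  assert (0 <= (x - y) ^ 2 * ((x + y) ^ 2 - d ^ 2))
    by (apply Rmult_le_pos; [apply pow2_ge_0|lra]).
  lra.
Qed.

Lemma ear_quartic_le P t :
  0 <= t <= 2 / 5 * P ->
  (2 / 5 * P - t) ^ 2 * t * (4 / 5 * P - t) <= 16 * (3 / 208 * P ^ 2 + P * t / 10) ^ 2.
Proof.
  intros Ht.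
  assert (0 <= (t ^ 2 - 4 / 5 * P * t + P ^ 2 / 20) ^ 2) by apply pow2_ge_0.
  assert (0 <= P ^ 2 * (t - 3 / 715 * P) ^ 2) by (apply Rmult_le_pos; apply pow2_ge_0).
  assert (0 <= (P ^ 2) ^ 2) by apply pow2_ge_0.
  assert (16 * (3 / 208 * P ^ 2 + P * t / 10) ^ 2 - (2 / 5 * P - t) ^ 2 * t * (4 / 5 * P - t) =
          (t ^ 2 - 4 / 5 * P * t + P ^ 2 / 20) ^ 2 + 11 / 50 * (P ^ 2 * (t - 3 / 715 * P) ^ 2)
          + (9 / 2704 - 1 / 400 - 11 / 50 * 9 / 511225) * (P ^ 2) ^ 2) by field.
  lra.
Qed.

(* [P]: perimeter of a pentagon; [s], [d]: the two sides and the diagonal of an ear;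
   [Q], [E]: twice the areas of the remaining quadrilateral and of the ear. *)
Lemma ear_cut_bound P s d Q E :
  0 <= d <= s -> s <= 2 / 5 * P ->
  8 * Q <= (P - s + d) ^ 2 -> 4 * E ^ 2 <= d ^ 2 * (s ^ 2 - d ^ 2) ->
  13 * (Q + E) <= 2 * P ^ 2.
Proof.
  intros Hd Hs HQ HE.
  set (t := s - d) in *. set (m := 2 / 5 * P - t).
  assert (Hmono : d ^ 2 * (s ^ 2 - d ^ 2) <= m ^ 2 * t * (2 * m + t)).
  { replace (d ^ 2 * (s ^ 2 - d ^ 2)) with (d ^ 2 * t * (2 * d + t)) by (unfold t; ring).
    assert (d ^ 2 <= m ^ 2) by (unfold m, t in *; nra).
    assert (0 <= t * (2 * d + t)) by (unfold t; nra).
    assert (0 <= m ^ 2 * t) by (apply Rmult_le_pos; [apply pow2_ge_0|unfold t; lra]).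
    assert (m ^ 2 * t * (2 * d + t) <= m ^ 2 * t * (2 * m + t))
      by (apply Rmult_le_compat_l; unfold m, t in *; lra).
    nra. }
  pose proof (ear_quartic_le P t ltac:(unfold t; lra)) as Hq.
  replace ((2 / 5 * P - t) ^ 2 * t * (4 / 5 * P - t)) with (m ^ 2 * t * (2 * m + t)) in Hq
    by (unfold m; field).
  set (R0 := 3 / 208 * P ^ 2 + P * t / 10) in *.
  set (R := P ^ 2 / 13 - (P - t) ^ 2 / 16).
  assert (0 <= R0) by (unfold R0, t; nra).
  assert (R0 <= R) by (unfold R0, R, t; nra).
  assert (E <= 2 * R) by nra.
  replace (P - s + d) with (P - t) in HQ by (unfold t; ring).
  unfold R in *. lra.
Qed.

Lemma pentagon_isoperimetric_ear a b c d e :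
  dist2 e a + dist2 a b <= 2 / 5 * (dist2 a b + dist2 b c + dist2 c d + dist2 d e + dist2 e a) ->
  13 / 2 * (cross2 a b + cross2 b c + cross2 c d + cross2 d e + cross2 e a) <=
  (dist2 a b + dist2 b c + dist2 c d + dist2 d e + dist2 e a) ^ 2.
Proof.
  intros Hs.
  pose proof (dist2_triangle e a b). pose proof (dist2_ge0 e b).
  pose proof (ear_cut_bound (dist2 a b + dist2 b c + dist2 c d + dist2 d e + dist2 e a)
     (dist2 e a + dist2 a b) (dist2 e b) (cross2 b c + cross2 c d + cross2 d e + cross2 e b)
     (cross2 (sub2 a e) (sub2 b e)) ltac:(lra) Hs) as Hcut.
  replace (dist2 a b + dist2 b c + dist2 c d + dist2 d e + dist2 e a - (dist2 e a + dist2 a b)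
           + dist2 e b) with (dist2 b c + dist2 c d + dist2 d e + dist2 e b) in Hcut by ring.
  specialize (Hcut (quadrilateral_isoperimetric b c d e) (triangle_cross2_sq_le e a b)).
  assert (cross2 b c + cross2 c d + cross2 d e + cross2 e b + cross2 (sub2 a e) (sub2 b e)
          = cross2 a b + cross2 b c + cross2 c d + cross2 d e + cross2 e a)
    by (unfold cross2, sub2; cbn [fst snd]; ring).
  lra.
Qed.

(* Some two consecutive sides make up at most 2/5 of the perimeter, since the five
   such pairs sum to twice the perimeter. *)
Lemma pentagon_isoperimetric a b c d e :
  13 / 2 * (cross2 a b + cross2 b c + cross2 c d + cross2 d e + cross2 e a) <=
  (dist2 a b + dist2 b c + dist2 c d + dist2 d e + dist2 e a) ^ 2.
Proof.
  set (P := dist2 a b + dist2 b c + dist2 c d + dist2 d e + dist2 e a).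
  destruct (Rle_dec (dist2 e a + dist2 a b) (2 / 5 * P)).
  { apply pentagon_isoperimetric_ear. exact r. }
  destruct (Rle_dec (dist2 a b + dist2 b c) (2 / 5 * P)).
  { pose proof (pentagon_isoperimetric_ear b c d e a ltac:(unfold P in *; lra)). unfold P; lra. }
  destruct (Rle_dec (dist2 b c + dist2 c d) (2 / 5 * P)).
  { pose proof (pentagon_isoperimetric_ear c d e a b ltac:(unfold P in *; lra)). unfold P; lra. }
  destruct (Rle_dec (dist2 c d + dist2 d e) (2 / 5 * P)).
  { pose proof (pentagon_isoperimetric_ear d e a b c ltac:(unfold P in *; lra)). unfold P; lra. }
  pose proof (pentagon_isoperimetric_ear e a b c d ltac:(unfold P in *; lra)). unfold P; lra.
Qed.

Definition hull_weights (k : nat) (p : nat -> pt2) (x : pt2) (lam : nat -> R) : Prop :=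
  (forall i, (i < k)%nat -> 0 <= lam i) /\ rsum k lam = 1 /\
  fst x = rsum k (fun i => lam i * fst (p i)) /\
  snd x = rsum k (fun i => lam i * snd (p i)).

Lemma rsum_cross2_sub k lam (p : nat -> pt2) d o :
  rsum k (fun i => lam i * cross2 d (sub2 (p i) o)) =
  fst d * (rsum k (fun i => lam i * snd (p i)) - rsum k lam * snd o)
  - snd d * (rsum k (fun i => lam i * fst (p i)) - rsum k lam * fst o).
Proof.
  induction k as [|k IH]; cbn [rsum]; [ring|].
  rewrite IH. unfold cross2, sub2; cbn [fst snd]. ring.
Qed.

Lemma hull_weights_cross2 k p x lam d o :
  hull_weights k p x lam ->
  cross2 d (sub2 x o) = rsum k (fun i => lam i * cross2 d (sub2 (p i) o)).
Proof.
  intros [_ [Hs [Hx Hy]]].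
  rewrite rsum_cross2_sub, Hs, <- Hx, <- Hy. unfold cross2, sub2; cbn [fst snd]. ring.
Qed.

Lemma in_hull2_halfplane k p x d o :
  in_hull2 k p x -> (forall i, (i < k)%nat -> 0 <= cross2 d (sub2 (p i) o)) ->
  0 <= cross2 d (sub2 x o).
Proof.
  intros [lam Hlam] Hp. rewrite (hull_weights_cross2 k p x lam d o Hlam).
  apply rsum_nonneg. intros i Hi. apply Rmult_le_pos; [apply Hlam|apply Hp]; exact Hi.
Qed.

Lemma hull_weights_on_boundary k p x lam d o :
  hull_weights k p x lam ->
  (forall i, (i < k)%nat -> 0 <= cross2 d (sub2 (p i) o)) -> cross2 d (sub2 x o) = 0 ->
  forall i, (i < k)%nat -> 0 < lam i -> cross2 d (sub2 (p i) o) = 0.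
Proof.
  intros Hlam Hp Hx i Hi Hli.
  rewrite (hull_weights_cross2 k p x lam d o Hlam) in Hx.
  assert (Hterm : lam i * cross2 d (sub2 (p i) o) = 0).
  { apply (rsum_nonneg_eq0 k (fun i => lam i * cross2 d (sub2 (p i) o))); auto.
    intros j Hj. apply Rmult_le_pos; [apply Hlam|apply Hp]; exact Hj. }
  apply Rmult_integral in Hterm. destruct Hterm; [lra|assumption].
Qed.

Lemma in_hull2_generator k (p : nat -> pt2) j : (j < k)%nat -> in_hull2 k p (p j).
Proof.
  intros Hj. exists (fun i => if Nat.eqb i j then 1 else 0).
  assert (Hlt : Nat.ltb j k = true) by (apply Nat.ltb_lt; exact Hj).
  split; [intros i _; destruct (Nat.eqb i j); lra|].
  rewrite !rsum_indicator, Hlt. split; [|split; reflexivity].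
  rewrite (rsum_ext k _ (fun i => (if Nat.eqb i j then 1 else 0) * 1)) by (intros; ring).
  rewrite rsum_indicator, Hlt. reflexivity.
Qed.

Lemma lines_meet_once u v o y :
  cross2 u (sub2 y o) = 0 -> cross2 v (sub2 y o) = 0 -> cross2 u v <> 0 -> y = o.
Proof.
  destruct u as [ux uy], v as [vx vy], y as [yx yy], o as [ox oy].
  unfold cross2, sub2; cbn [fst snd]. intros Hu Hv Huv.
  assert (Ex : (yx - ox) * (ux * vy - uy * vx) = 0).
  { replace ((yx - ox) * (ux * vy - uy * vx)) with
      (vx * (ux * (yy - oy) - uy * (yx - ox)) - ux * (vx * (yy - oy) - vy * (yx - ox))) by ring.
    rewrite Hu, Hv. ring. }
  assert (Ey : (yy - oy) * (ux * vy - uy * vx) = 0).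
  { replace ((yy - oy) * (ux * vy - uy * vx)) with
      (vy * (ux * (yy - oy) - uy * (yx - ox)) - uy * (vx * (yy - oy) - vy * (yx - ox))) by ring.
    rewrite Hu, Hv. ring. }
  apply Rmult_integral in Ex, Ey.
  destruct Ex as [Ex|Ex]; [|contradiction]. destruct Ey as [Ey|Ey]; [|contradiction].
  f_equal; lra.
Qed.

Section ConvexPolygon.

Variable n : nat.
Variable w : nat -> pt2.
Hypothesis Hw : convex_polygon_ccw n w.

Lemma convex_polygon_edge_halfplane i x :
  (i < n)%nat -> in_hull2 n w x ->
  0 <= cross2 (sub2 (w (nxt n i)) (w i)) (sub2 x (w i)).
Proof.
  intros Hi Hx. apply (in_hull2_halfplane n w x _ _ Hx).
  intros j Hj.
  destruct (Nat.eq_dec j i) as [->|Hji].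
  { unfold cross2, sub2; cbn [fst snd]. lra. }
  destruct (Nat.eq_dec j (nxt n i)) as [->|Hjn].
  { unfold cross2, sub2; cbn [fst snd]. lra. }
  apply Rlt_le, (proj2 Hw); assumption.
Qed.

Lemma convex_polygon_cross2_nonneg i :
  (i < n)%nat -> in_hull2 n w origin2 -> 0 <= cross2 (w i) (w (nxt n i)).
Proof.
  intros Hi Ho. pose proof (convex_polygon_edge_halfplane i origin2 Hi Ho) as H.
  unfold cross2, sub2, origin2 in *; cbn [fst snd] in *. lra.
Qed.

Lemma convex_polygon_vertex_inj i j : (i < n)%nat -> (j < n)%nat -> w i = w j -> i = j.
Proof.
  pose proof Hw as [Hn3 Hcv]. intros Hi Hj Eij.
  destruct (Nat.eq_dec i j) as [|Hij]; [assumption|exfalso].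
  assert (Hk : exists k, (k < n)%nat /\ k <> i /\ k <> j).
  { destruct (Nat.eq_dec i 0), (Nat.eq_dec j 0), (Nat.eq_dec i 1), (Nat.eq_dec j 1);
      first [exists 0%nat; lia | exists 1%nat; lia | exists 2%nat; lia]. }
  destruct Hk as [k [Hk [Hki Hkj]]].
  destruct (Nat.eq_dec j (nxt n i)) as [Hjn|Hjn].
  - pose proof (Hcv i k Hi Hk Hki ltac:(congruence)) as H.
    rewrite <- Hjn, <- Eij in H. unfold cross2, sub2 in H; cbn [fst snd] in H. lra.
  - pose proof (Hcv i j Hi Hj (not_eq_sym Hij) Hjn) as H.
    rewrite <- Eij in H. unfold cross2, sub2 in H; cbn [fst snd] in H. lra.
Qed.

Lemma convex_polygon_pred j :
  (j < n)%nat -> exists pj, (pj < n)%nat /\ nxt n pj = j /\ pj <> j /\ pj <> nxt n j.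
Proof.
  pose proof Hw as [Hn3 _]. intros Hj.
  destruct (nxt_cases n j Hj) as [[Hsj ->]|[Hsj ->]].
  - destruct j as [|j].
    + exists (n - 1)%nat.
      destruct (nxt_cases n (n - 1) ltac:(lia)) as [[? _]|[_ ->]]; [lia|]. lia.
    + exists j. destruct (nxt_cases n j ltac:(lia)) as [[_ ->]|[? _]]; lia.
  - exists (j - 1)%nat. destruct (nxt_cases n (j - 1) ltac:(lia)) as [[_ ->]|[? _]]; lia.
Qed.

Lemma convex_polygon_vertex_generator k (F : nat -> pt2) j :
  (forall x, in_hull2 n w x <-> in_hull2 k F x) -> (j < n)%nat ->
  exists m, (m < k)%nat /\ F m = w j.
Proof.
  pose proof Hw as [_ Hcv]. intros Hhull Hj.
  (* Only [w j] lies on the lines of both edges at [w j], and so does every generator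
     carrying part of its weight. *)
  destruct (convex_polygon_pred j Hj) as [pj [Hpj [Hnxt [Hpj1 Hpj2]]]].
  assert (HF : forall m, (m < k)%nat -> in_hull2 n w (F m))
    by (intros; apply Hhull, in_hull2_generator; assumption).
  destruct (proj1 (Hhull (w j)) (in_hull2_generator n w j Hj)) as [mu Hmu].
  set (d1 := sub2 (w (nxt n j)) (w j)). set (d2 := sub2 (w j) (w pj)).
  assert (H1 : forall m, (m < k)%nat -> 0 < mu m -> cross2 d1 (sub2 (F m) (w j)) = 0).
  { apply (hull_weights_on_boundary k F (w j) mu); [exact Hmu| |].
    - intros m Hm. apply convex_polygon_edge_halfplane; auto.
    - unfold cross2, sub2; cbn [fst snd]. ring. }
  assert (H2 : forall m, (m < k)%nat -> 0 < mu m -> cross2 d2 (sub2 (F m) (w pj)) = 0).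
  { apply (hull_weights_on_boundary k F (w j) mu); [exact Hmu| |].
    - intros m Hm. unfold d2. rewrite <- Hnxt. apply convex_polygon_edge_halfplane; auto.
    - unfold d2, cross2, sub2; cbn [fst snd]. ring. }
  destruct (rsum_exists_pos k mu) as [m [Hm Hmum]]; [destruct Hmu as [_ [-> _]]; lra|].
  exists m. split; [exact Hm|].
  apply (lines_meet_once d1 d2); [auto| |].
  - rewrite <- (H2 m Hm Hmum). unfold d2, cross2, sub2; cbn [fst snd]. ring.
  - pose proof (Hcv j pj Hj Hpj Hpj1 Hpj2) as Hturn.
    unfold d1, d2, cross2, sub2 in *; cbn [fst snd] in *. lra.
Qed.

Lemma convex_polygon_size_le k (F : nat -> pt2) :
  (forall x, in_hull2 n w x <-> in_hull2 k F x) -> (n <= k)%nat.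
Proof.
  intros Hhull.
  assert (Hnodup : NoDup (map w (seq 0 n))).
  { apply NoDup_map_NoDup_ForallPairs; [|apply seq_NoDup].
    intros i j Hi Hj. apply in_seq in Hi, Hj. apply convex_polygon_vertex_inj; lia. }
  assert (Hincl : incl (map w (seq 0 n)) (map F (seq 0 k))).
  { intros x Hx. apply in_map_iff in Hx as [j [<- Hj]]. apply in_seq in Hj.
    destruct (convex_polygon_vertex_generator k F j Hhull ltac:(lia)) as [m [Hm <-]].
    apply in_map, in_seq. lia. }
  pose proof (NoDup_incl_length Hnodup Hincl) as Hlen.
  rewrite !length_map, !length_seq in Hlen. exact Hlen.
Qed.

(* The sum is translation invariant; centred at [w 0] it is a fan of positive triangles. *)
Lemma convex_polygon_area_pos : 0 < polygon_area n w.
Proof.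
  pose proof Hw as [Hn3 Hcv]. unfold polygon_area.
  set (fan i := cross2 (sub2 (w i) (w 0%nat)) (sub2 (w (nxt n i)) (w 0%nat))).
  assert (Hfan : rsum n (fun i => cross2 (w i) (w (nxt n i))) = rsum n fan).
  { rewrite (rsum_ext n _ (fun i => fan i
        + (cross2 (w 0%nat) (w (nxt n i)) - cross2 (w 0%nat) (w i))))
      by (intros; unfold fan, cross2, sub2; cbn [fst snd]; ring).
    rewrite rsum_add, (rsum_cyclic_diff n (fun i => cross2 (w 0%nat) (w i))). ring. }
  assert (Hturn : forall i, (i < n)%nat -> i <> 0%nat -> nxt n i <> 0%nat -> 0 < fan i).
  { intros i Hi Hi0 Hn0.
    pose proof (Hcv i 0%nat Hi ltac:(lia) (not_eq_sym Hi0) (not_eq_sym Hn0)).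
    unfold fan, cross2, sub2 in *; cbn [fst snd] in *. lra. }
  rewrite Hfan. apply Rmult_lt_0_compat; [lra|].
  apply (rsum_pos n fan 1%nat); [|lia|].
  - intros i Hi.
    destruct (Nat.eq_dec i 0) as [->|Hi0].
    { unfold fan, cross2, sub2; cbn [fst snd]. lra. }
    destruct (Nat.eq_dec (nxt n i) 0) as [Hn0|Hn0].
    { unfold fan. rewrite Hn0. unfold cross2, sub2; cbn [fst snd]. lra. }
    apply Rlt_le, Hturn; assumption.
  - apply Hturn; [lia|lia|]. destruct (nxt_cases n 1 ltac:(lia)) as [[_ ->]|[? _]]; lia.
Qed.

End ConvexPolygon.

Definition perimeter (n : nat) (w : nat -> pt2) : R :=
  rsum n (fun i => dist2 (w i) (w (nxt n i))).

(* Polygons with fewer vertices are degenerate pentagons (repeat the last vertex). *)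
Lemma polygon_isoperimetric_le5 n w :
  (n <= 5)%nat -> 13 * polygon_area n w <= perimeter n w ^ 2.
Proof.
  intros Hn. unfold polygon_area, perimeter.
  pose proof (pentagon_isoperimetric (w 0%nat) (w (Nat.min 1 (n - 1))) (w (Nat.min 2 (n - 1)))
                (w (Nat.min 3 (n - 1))) (w (Nat.min 4 (n - 1)))) as Hpent.
  destruct n as [|[|[|[|[|[|n]]]]]]; [| | | | | |lia]; unfold nxt; cbn in Hpent |- *;
    rewrite ?cross2_self, ?dist2_self in *; lra.
Qed.

Lemma tri_area_lift_apex a b :
  tri_area (lift a) (lift b) e3 = / 2 * sqrt (dist2 a b ^ 2 + cross2 a b ^ 2) /\
  tri_area (lift a) (lift b) e3m = / 2 * sqrt (dist2 a b ^ 2 + cross2 a b ^ 2).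
Proof.
  unfold tri_area, norm3. rewrite dist2_sq.
  split; do 2 f_equal; unfold dot3, cross3, sub3, lift, e3, e3m, cross2; cbn; ring.
Qed.

Lemma tet_vol_lift_apex a b :
  tet_vol (lift a) (lift b) e3 = / 6 * Rabs (cross2 a b) /\
  tet_vol (lift a) (lift b) e3m = / 6 * Rabs (cross2 a b).
Proof.
  unfold tet_vol. split; [|rewrite <- Rabs_Ropp];
    do 2 f_equal; unfold dot3, cross3, lift, e3, e3m, cross2; cbn; ring.
Qed.

Lemma surface_area_ge n w :
  sqrt (perimeter n w ^ 2 + (2 * polygon_area n w) ^ 2) <= surface_area n w.
Proof.
  replace (surface_area n w) with
    (rsum n (fun i => sqrt (dist2 (w i) (w (nxt n i)) ^ 2 + cross2 (w i) (w (nxt n i)) ^ 2))).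
  - unfold perimeter, polygon_area.
    replace (2 * (/ 2 * rsum n (fun i => cross2 (w i) (w (nxt n i)))))
      with (rsum n (fun i => cross2 (w i) (w (nxt n i)))) by field.
    apply rsum_norm_le.
  - apply rsum_ext. intros i _.
    destruct (tri_area_lift_apex (w i) (w (nxt n i))) as [-> ->]. field.
Qed.

Lemma surface_area_sq_ge_le5 n w :
  (n <= 5)%nat -> polygon_area n w * (13 + 4 * polygon_area n w) <= surface_area n w ^ 2.
Proof.
  intros Hn.
  pose proof (polygon_isoperimetric_le5 n w Hn).
  pose proof (pow_incr _ _ 2 (conj (sqrt_pos _) (surface_area_ge n w))) as Hsq.
  rewrite pow2_sqrt in Hsq by apply sum_sq_ge0. lra.
Qed.

Lemma volume_eq n w :
  (forall i, (i < n)%nat -> 0 <= cross2 (w i) (w (nxt n i))) ->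
  volume n w = 2 / 3 * polygon_area n w.
Proof.
  intros Hc. unfold volume, polygon_area.
  rewrite (rsum_ext n _ (fun i => / 3 * cross2 (w i) (w (nxt n i)))).
  - rewrite rsum_scal. field.
  - intros i Hi. destruct (tet_vol_lift_apex (w i) (w (nxt n i))) as [-> ->].
    rewrite Rabs_pos_eq by (apply Hc; exact Hi). field.
Qed.

Lemma ratio_gt K A S :
  0 < A -> 0 <= S -> A * (13 + 4 * A) <= S ^ 2 ->
  16 * K ^ 2 * A < 81 * (13 + 4 * A) ^ 3 ->
  S ^ 3 / (2 / 3 * A) ^ 2 > K.
Proof.
  intros HA HS HS2 HK.
  set (X := S ^ 3 / (2 / 3 * A) ^ 2).
  assert (HX : 0 <= X).
  { apply Rmult_le_pos; [apply pow_le; exact HS|].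
    apply Rlt_le, Rinv_0_lt_compat, pow_lt. lra. }
  assert (HX2 : X ^ 2 * (16 * A ^ 4) = 81 * (S ^ 2) ^ 3) by (unfold X; field; lra).
  assert (Hcube : (A * (13 + 4 * A)) ^ 3 <= (S ^ 2) ^ 3) by (apply pow_incr; nra).
  assert (HA4 : 0 < 16 * A ^ 4) by (pose proof (pow_lt A 4 HA); lra).
  assert (K ^ 2 * (16 * A ^ 4) < X ^ 2 * (16 * A ^ 4)).
  { rewrite HX2.
    replace (K ^ 2 * (16 * A ^ 4)) with (A ^ 3 * (16 * K ^ 2 * A)) by ring.
    replace ((A * (13 + 4 * A)) ^ 3) with (A ^ 3 * (13 + 4 * A) ^ 3) in Hcube by ring.
    pose proof (pow_lt A 3 HA). nra. }
  assert (K ^ 2 < X ^ 2) by (apply (Rmult_lt_reg_r (16 * A ^ 4)); assumption).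
  nra.
Qed.

Lemma cube_ge_tangent x0 x : 0 <= x0 <= x -> x0 ^ 3 + 3 * x0 ^ 2 * (x - x0) <= x ^ 3.
Proof.
  intros H.
  assert (0 <= (x - x0) ^ 2 * (x + 2 * x0)) by (apply Rmult_le_pos; [apply pow2_ge_0|lra]).
  nra.
Qed.

Lemma ratio_bound_188 A :
  0 < A -> (A <= 411 / 1000 \/ A >= 51 / 10) -> 16 * 188 ^ 2 * A < 81 * (13 + 4 * A) ^ 3.
Proof.
  intros HA [H|H].
  - pose proof (cube_ge_tangent 13 (13 + 4 * A) ltac:(lra)). nra.
  - pose proof (cube_ge_tangent (334 / 10) (13 + 4 * A) ltac:(lra)). nra.
Qed.

Lemma ratio_bound_344 A :
  0 < A -> (A <= 9 / 100 \/ A >= 15) -> 16 * 344 ^ 2 * A < 81 * (13 + 4 * A) ^ 3.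
Proof.
  intros HA [H|H].
  - pose proof (cube_ge_tangent 13 (13 + 4 * A) ltac:(lra)). nra.
  - pose proof (cube_ge_tangent 73 (13 + 4 * A) ltac:(lra)). nra.
Qed.

Theorem mainTheorem8 (n : nat) (w : nat -> pt2) (HP : strange n w) :
  ((polygon_area n w <= 411 / 1000 \/ polygon_area n w >= 51 / 10) ->
     surface_area n w ^ 3 / volume n w ^ 2 > 188) /\
  ((polygon_area n w <= 9 / 100 \/ polygon_area n w >= 15) ->
     surface_area n w ^ 3 / volume n w ^ 2 > 344).
Proof.
  destruct HP as [Hw [v3 [v4 [v5 [v6 [Hhull _]]]]]].
  assert (Hn : (n <= 5)%nat) by exact (convex_polygon_size_le n w Hw 5 _ Hhull).
  assert (Ho : in_hull2 n w origin2)
    by exact (proj2 (Hhull _) (in_hull2_generator 5 _ 0 ltac:(lia))).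
  assert (HA : 0 < polygon_area n w) by exact (convex_polygon_area_pos n w Hw).
  assert (HS : polygon_area n w * (13 + 4 * polygon_area n w) <= surface_area n w ^ 2)
    by exact (surface_area_sq_ge_le5 n w Hn).
  assert (HS0 : 0 <= surface_area n w)
    by (eapply Rle_trans; [apply sqrt_pos|apply surface_area_ge]).
  rewrite (volume_eq n w (fun i Hi => convex_polygon_cross2_nonneg n w Hw i Hi Ho)).
  split; intros Hr; apply ratio_gt; auto.
  - apply ratio_bound_188; assumption.
  - apply ratio_bound_344; assumption.
Qed.
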